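(* Let $d=2$, $\varepsilon>0$, $\pi<q^{2+\varepsilon}$ and $L=q^{-1-\varepsilon/3}$. For $q$ small enough, \[ \nu\otimes\mu\left([L]^{2}\text{ is good}\right)\ge1-2q^{\varepsilon/3}. \]
   Context: Environment $\omega\in\{\text{susceptible},\text{immune}\}^{\mathbb{Z}^2}$ is drawn from $\nu$, the product measure with $\nu(\omega_x=\text{immune})=\pi$; given $\omega$, a configuration $\eta\in\{i,h\}^{\mathcal{S}}$ on the susceptible set $\mathcal{S}$ is drawn from $\mu$, the product measure with $\mu(\eta_x=i)=q$ ($i$ = infected, $h$ = healthy); $\nu\otimes\mu$ is the joint law. $[L]=\{1,\dots,L\}$ (with $L$ rounded to an integer). A square of the form $x+[L]^2$ is good if all its sites are susceptible and each of its rows and columns contains at least one infected site. *)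

From mathcomp Require Import all_boot all_order all_algebra.
From mathcomp Require Import reals exp.
Set Implicit Arguments. Unset Strict Implicit. Unset Printing Implicit Defensive.
Import Order.TTheory GRing.Theory Num.Theory.
Local Open Scope ring_scope.

(* Sites of the box [L]^2 = {1..L}^2, indexed by 'I_L * 'I_L (shift by one). *)
Definition site (L : nat) := ('I_L * 'I_L)%type.

(* Environment restricted to the box: om x = true  <->  x is immune. *)
(* Infection configuration in the box: eta x = true <-> x is infected. *)
Definition good (L : nat) (om eta : {ffun site L -> bool}) : bool :=
  [&& [forall x, ~~ om x],
      [forall i : 'I_L, [exists j : 'I_L, eta (i, j)]] &
      [forall j : 'I_L, [exists i : 'I_L, eta (i, j)]]].

(* nu (x) mu ( [L]^2 is good ): the event only depends on the sites in the
   box, so its probability is the finite sum of the product weights of the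
   box-marginals.  nu: each site immune independently with probability pi;
   mu: each (susceptible) site infected independently with probability q. *)
Definition prob_good (R : realType) (pi q : R) (L : nat) : R :=
  \sum_(om : {ffun site L -> bool}) \sum_(eta : {ffun site L -> bool})
    (\prod_(x : site L) (if om x then pi else 1 - pi)) *
    (\prod_(x : site L) (if eta x then q else 1 - q)) *
    (good om eta)%:R.

Definition Lq (R : realType) (q eps : R) : nat :=
  Num.truncn (powR q (- 1 - eps / 3)).

(* The box [L]^2 is good iff all of its L^2 sites are susceptible and each of
   its 2L lines (rows and columns) contains an infected site, and these two
   events are independent.  With a = eps/3, Bernoulli's inequality bounds the
   probability that some site is immune by L^2 pi <= q^a, and the union bound
   bounds the probability that some line is empty by
   2L (1-q)^L <= 2L exp(1 - q^(-a)), where L ~ q^(-1-a); this is at most q^a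
   for small q because exp(q^(-a)) beats every power of 1/q. *)

From mathcomp Require Import all_boot all_order all_algebra.
From mathcomp Require Import reals exp.
From mathcomp Require Import sequences ring lra.
Set Implicit Arguments. Unset Strict Implicit. Unset Printing Implicit Defensive.
Import Order.TTheory GRing.Theory Num.Theory.
Local Open Scope ring_scope.

Section BernoulliProduct.
Variables (R : realDomainType) (T : finType) (p : R).

Definition bernoulli_weight (f : {ffun T -> bool}) : R :=
  \prod_x (if f x then p else 1 - p).

Lemma bernoulli_weight_ge0 f : 0 <= p <= 1 -> 0 <= bernoulli_weight f.
Proof. by move=> /andP[p_ge0 p_le1]; apply: prodr_ge0 => x _; case: (f x); lra. Qed.

Lemma sum_bernoulli_weight : \sum_f bernoulli_weight f = 1.
Proof.
rewrite -(bigA_distr_bigA (fun x b => if b then p else 1 - p)) big1 // => x _.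
by rewrite big_bool /= addrC subrK.
Qed.

Lemma sum_bernoulli_weight_avoid (S : {set T}) :
  \sum_f bernoulli_weight f * [forall x in S, ~~ f x]%:R = (1 - p) ^+ #|S|.
Proof.
pose F x (b : bool) := if b then (x \notin S)%:R * p else 1 - p.
have avoidE f : bernoulli_weight f * [forall x in S, ~~ f x]%:R = \prod_x F x (f x).
  rewrite /bernoulli_weight /F.
  case: (boolP [forall x in S, ~~ f x]) => [/forall_inP f_avoid | ].
    rewrite mulr1; apply: eq_bigr => x _.
    by case: (boolP (x \in S)) => [/f_avoid/negbTE -> | _]; rewrite ?mul1r.
  rewrite negb_forall_in => /exists_inP [x xS /negPn fx].
  by rewrite mulr0 (bigD1 x) //= fx xS /= !mul0r.
rewrite (eq_bigr _ (fun f _ => avoidE f)) -(bigA_distr_bigA F).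
rewrite (eq_bigr (fun x => if x \in S then 1 - p else 1)) => [|x _].
  by rewrite -big_mkcond prodr_const.
by rewrite big_bool /F; case: (x \in S); rewrite /= ?mul0r ?add0r // mul1r addrC subrK.
Qed.

Lemma sum_bernoulli_weight_hit_ge (I : finType) (S : I -> {set T}) : 0 <= p <= 1 ->
  1 - \sum_i (1 - p) ^+ #|S i| <=
  \sum_f bernoulli_weight f * [forall i, [exists x in S i, f x]]%:R.
Proof.
move=> p01.
have miss_le f : 1 - [forall i, [exists x in S i, f x]]%:R <=
                 \sum_i [forall x in S i, ~~ f x]%:R :> R.
  case: (boolP [forall i, _]) => [_ | ]; first by rewrite subrr sumr_ge0.
  rewrite negb_forall => /existsP [i]; rewrite negb_exists_in => miss_i.
  by rewrite subr0 (bigD1 i) //= miss_i lerDl sumr_ge0.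
have -> : \sum_i (1 - p) ^+ #|S i| =
          \sum_f bernoulli_weight f * \sum_i [forall x in S i, ~~ f x]%:R.
  under [RHS]eq_bigr do rewrite big_distrr.
  by rewrite exchange_big; apply: eq_bigr => i _; rewrite sum_bernoulli_weight_avoid.
rewrite -{1}sum_bernoulli_weight -sumrB; apply: ler_sum => f _.
rewrite -{1}[bernoulli_weight f]mulr1 -mulrBr ler_wpM2l ?bernoulli_weight_ge0 //.
by rewrite lerBlDl -lerBlDr miss_le.
Qed.
End BernoulliProduct.

Lemma bernoulli_ineq (R : realDomainType) (x : R) n :
  -1 <= x -> 1 + n%:R * x <= (1 + x) ^+ n.
Proof.
move=> x_ge; elim: n => [|n IHn]; first by rewrite mul0r addr0 expr0.
have nx2_ge0 : 0 <= n%:R * x ^+ 2 by rewrite mulr_ge0 ?sqr_ge0.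
rewrite exprS -natr1; nra.
Qed.

Section ExpBounds.
Variable R : realType.

Lemma powR_le_expR (t c : R) : 0 <= t -> 0 < c -> t `^ c <= c `^ c * expR t.
Proof.
move=> t_ge0 c_gt0; have tc_ge0 : 0 <= t / c := divr_ge0 t_ge0 (ltW c_gt0).
have c_neq0 := lt0r_neq0 c_gt0.
rewrite {1}(_ : t = c * (t / c)); last by rewrite mulrC divfK.
rewrite powRM ?(ltW c_gt0) // ler_pM2l ?powR_gt0 //.
rewrite -{2}[t](divfK c_neq0) expRM.
apply: ge0_ler_powR; rewrite ?nnegrE ?expR_ge0 //; first exact: ltW.
by have := expR_ge1Dx (t / c); lra.
Qed.

Lemma expr1B_le_expR (q : R) n : q <= 1 -> (1 - q) ^+ n <= expR (- q * n%:R).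
Proof.
move=> q_le1; rewrite expRM_natr; apply: lerXn2r; rewrite ?nnegrE ?expR_ge0 //; first lra.
by have := expR_ge1Dx (- q); lra.
Qed.

End ExpBounds.

Section Box.
Variables (R : realType) (L : nat) (pi q : R).

Definition line (k : 'I_L + 'I_L) : {set site L} :=
  match k with inl i => [set x | x.1 == i] | inr j => [set x | x.2 == j] end.

Lemma card_line k : #|line k| = L.
Proof.
case: k => [i | j] /=.
  have -> : [set x : site L | x.1 == i] = setX [set i] setT.
    by apply/setP => x; rewrite !inE andbT.
  by rewrite cardsX cards1 cardsT card_ord mul1n.
have -> : [set x : site L | x.2 == j] = setX setT [set j].
  by apply/setP => x; rewrite !inE.
by rewrite cardsX cards1 cardsT card_ord muln1.
Qed.

Definition lines_hit (eta : {ffun site L -> bool}) : bool :=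
  [forall k, [exists x in line k, eta x]].

Lemma goodE om eta : good om eta = [forall x, ~~ om x] && lines_hit eta.
Proof.
rewrite /good /lines_hit; congr (_ && _); apply/andP/forallP => [[rows cols] [i | j] | hit].
- have /existsP [j eta_ij] := forallP rows i.
  by apply/exists_inP; exists (i, j); rewrite ?inE.
- have /existsP [i eta_ij] := forallP cols j.
  by apply/exists_inP; exists (i, j); rewrite ?inE.
split; apply/forallP.
- move=> i; have /exists_inP [[_ j] /[!inE] /= /eqP -> eta_ij] := hit (inl i).
  by apply/existsP; exists j.
- move=> j; have /exists_inP [[i _] /[!inE] /= /eqP -> eta_ij] := hit (inr j).
  by apply/existsP; exists i.
Qed.

Lemma prob_goodE : prob_good pi q L =
  (1 - pi) ^+ (L * L) * \sum_eta bernoulli_weight q eta * (lines_hit eta)%:R.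
Proof.
have -> : (1 - pi) ^+ (L * L) =
          \sum_om bernoulli_weight pi om * [forall x in [set: site L], ~~ om x]%:R.
  by rewrite sum_bernoulli_weight_avoid cardsT card_prod card_ord.
rewrite big_distrl; apply: eq_bigr => om _; rewrite big_distrr; apply: eq_bigr => eta _.
have -> : [forall x in [set: site L], ~~ om x] = [forall x, ~~ om x].
  by apply: eq_forallb => x; rewrite in_setT.
by rewrite /= goodE -mulnb natrM mulrACA.
Qed.

Lemma prob_good_ge : 0 <= pi <= 1 -> 0 <= q <= 1 ->
  1 - (L * L)%:R * pi - 2 * L%:R * (1 - q) ^+ L <= prob_good pi q L.
Proof.
move=> /andP[pi_ge0 pi_le1] q01; rewrite prob_goodE.
set A := (1 - pi) ^+ _; set Q := \sum_(_ : {ffun _ -> _}) _.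
set M := (L * L)%:R * pi; set B := 2 * L%:R * (1 - q) ^+ L.
have A_ge : 1 - M <= A.
  by have := @bernoulli_ineq _ (- pi) (L * L); rewrite mulrN; apply; lra.
have A_ge0 : 0 <= A by apply: exprn_ge0; lra.
have Q_ge : 1 - B <= Q.
  have := sum_bernoulli_weight_hit_ge line q01.
  rewrite (eq_bigr (fun _ => (1 - q) ^+ L)) => [|k _]; last by rewrite card_line.
  rewrite sumr_const card_sum card_ord.
  suff -> : (1 - q) ^+ L *+ (L + L) = B by [].
  by rewrite /B -mulr_natl natrD; ring.
have Q_ge0 : 0 <= Q.
  by apply: sumr_ge0 => eta _; rewrite mulr_ge0 ?bernoulli_weight_ge0.
have M_ge0 : 0 <= M by rewrite mulr_ge0.
have B_ge0 : 0 <= B by rewrite !mulr_ge0 // exprn_ge0 //; case/andP: q01; lra.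
have [M_le1 | M_gt1] := lerP M 1; nra.
Qed.
End Box.

Section BoxScale.
Variables (R : realType) (a q : R) (L : nat).
Hypotheses (a_gt0 : 0 < a) (q_gt0 : 0 < q) (q_le1 : q <= 1).
Hypothesis L_le : L%:R <= q `^ (-1 - a).

Let powRqD r s : q `^ (r + s) = q `^ r * q `^ s.
Proof. by rewrite powRD // (gt_eqF q_gt0) implybT. Qed.

Lemma box_area_mul_le (pi : R) : 0 <= pi -> pi < q `^ (2 + 3 * a) ->
  (L * L)%:R * pi <= q `^ a.
Proof.
move=> pi_ge0 pi_lt.
have -> : q `^ a = q `^ (-1 - a) * q `^ (-1 - a) * q `^ (2 + 3 * a).
  by rewrite -!powRqD; congr (q `^ _); ring.
by rewrite natrM ler_pM ?mulr_ge0 ?ler_pM // ltW.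
Qed.

(* With t = q^(-a) and c = (1 + 3a)/a, t^c = q^(-1-3a) <= c^c exp t; below the
   threshold 2 e c^c q^a <= 1, which absorbs the factor L ~ q^(-1-a). *)
Definition line_defect_threshold : R :=
  (2 * expR 1 * ((1 + 3 * a) / a) `^ ((1 + 3 * a) / a)) `^ (- a^-1).

Lemma line_defect_threshold_gt0 : 0 < line_defect_threshold.
Proof.
have c_gt0 : 0 < (1 + 3 * a) / a by apply: divr_gt0 => //; have := a_gt0; lra.
by rewrite powR_gt0 // !mulr_gt0 ?expR_gt0 ?powR_gt0.
Qed.

Hypothesis L_gt : q `^ (-1 - a) < L%:R + 1.

Lemma box_line_defect_le : q < line_defect_threshold ->
  2 * L%:R * (1 - q) ^+ L <= q `^ a.
Proof.
move=> q_lt; set x := q `^ (-1 - a); set t := q `^ (- a).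
set c := (1 + 3 * a) / a; set K := 2 * expR 1 * c `^ c.
have c_gt0 : 0 < c by apply: divr_gt0 => //; have := a_gt0; lra.
have K_gt0 : 0 < K by rewrite !mulr_gt0 ?expR_gt0 ?powR_gt0.
have Kq_le1 : K * q `^ a <= 1.
  have : q `^ a <= line_defect_threshold `^ a.
    apply: (ge0_ler_powR (ltW a_gt0)); last exact: ltW.
      by rewrite nnegrE ltW.
    by rewrite nnegrE powR_ge0.
  rewrite -powRrM mulNr mulVf ?(lt0r_neq0 a_gt0) // powR_inv1 ?(ltW K_gt0) //.
  by move/(ler_wpM2l (ltW K_gt0)); rewrite mulfV ?(lt0r_neq0 K_gt0).
have qx : q * x = t.
  by rewrite -{1}(powRr1 (ltW q_gt0)) -powRqD; congr (q `^ _); ring.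
have decay : (1 - q) ^+ L <= expR 1 * expR (- t).
  rewrite -expRD; apply: le_trans (expr1B_le_expR L q_le1) _.
  by rewrite ler_expR; have := q_gt0; have := q_le1; have := L_gt; rewrite -/x; nra.
have growth : x <= q `^ a * q `^ a * (c `^ c * expR t).
  have -> : x = q `^ a * q `^ a * t `^ c.
    rewrite /t -powRrM -!powRqD; congr (q `^ _).
    by rewrite /c; field; rewrite lt0r_neq0.
  by apply: ler_wpM2l; rewrite ?mulr_ge0 ?powR_ge0 // powR_le_expR ?powR_ge0.
have L_le_x : L%:R <= x := L_le.
apply: (le_trans (y := 2 * x * (expR 1 * expR (- t)))).
  by rewrite ler_pM ?mulr_ge0 ?exprn_ge0 ?ler_wpM2l //; have := q_le1; lra.
apply: (le_trans (y := 2 * (q `^ a * q `^ a * (c `^ c * expR t)) * (expR 1 * expR (- t)))).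
  by rewrite ler_wpM2r ?mulr_ge0 ?expR_ge0 ?ler_wpM2l.
have -> : 2 * (q `^ a * q `^ a * (c `^ c * expR t)) * (expR 1 * expR (- t)) =
          q `^ a * (K * q `^ a) * (expR t * expR (- t)) by rewrite /K; ring.
by rewrite expRxMexpNx_1 mulr1 ler_piMr ?powR_ge0.
Qed.

End BoxScale.

Theorem claim1 (R : realType) (eps : R) (heps : 0 < eps) :
  exists q0 : R, 0 < q0 /\
    forall q pi : R, 0 < q -> q < q0 ->
      0 <= pi -> pi < powR q (2 + eps) ->
      1 - 2 * powR q (eps / 3) <= prob_good pi q (Lq q eps).
Proof.
set a := eps / 3; have a_gt0 : 0 < a by rewrite divr_gt0.
exists (Num.min 1 (line_defect_threshold a)); split.
  by rewrite lt_min ltr01 line_defect_threshold_gt0.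
move=> q pi q_gt0; rewrite lt_min => /andP[q_lt1 q_lt] pi_ge0 pi_lt.
have {}pi_lt : pi < q `^ (2 + 3 * a) by rewrite /a mulrC divfK ?pnatr_eq0.
have q_le1 := ltW q_lt1.
have q01 : 0 <= q <= 1 by rewrite (ltW q_gt0).
have pi01 : 0 <= pi <= 1.
  rewrite pi_ge0 andTb; apply/ltW/(lt_le_trans pi_lt); rewrite -[leRHS](powRr0 q).
  by apply: ger_powR; [apply/andP | have := a_gt0; lra].
rewrite /Lq -/a; set L := Num.truncn _.
have L_le : L%:R <= q `^ (-1 - a) by rewrite truncn_le powR_ge0.
have L_gt : q `^ (-1 - a) < L%:R + 1 by rewrite natr1 truncnS_gt.
clearbody L; apply: le_trans (prob_good_ge L pi01 q01).
have := box_area_mul_le q_gt0 L_le pi_ge0 pi_lt.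
have := box_line_defect_le a_gt0 q_gt0 q_le1 L_le L_gt q_lt.
lra.
Qed.
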